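(* Let $U_T^j$ be a sequence of regions of Riemannian 3-manifolds foliated by smooth IMCF $\Sigma^j_t$, $t\in[0,T]$, parametrized as $\Sigma\times[0,T]$ with $\Sigma$ identified with the unit sphere $S^2$. Assume that for all $j$ $$\frac{1}{H_j(x,t)^2}\ge\frac{r_0^2}{4}e^t-\frac1j,\qquad \mathrm{diam}(U_T,\bar g^j)\le D,\qquad \Big(1-\frac Cj\Big)r_0^2e^t\sigma\le g^j(x,t)\le Cr_0^2e^t\sigma.$$ Then for all $p,q\in\Sigma\times[0,T]$, $$\liminf_{j\to\infty}d_{\hat g^j}(p,q)\ge d_\delta(p,q).$$
   Context: A smooth IMCF is a smooth family of embeddings $F:\Sigma\times[0,T]\to M$ with mean curvature $H>0$ and $\partial_tF=\nu/H$. The flow identifies $U^j_T$ with $\Sigma\times[0,T]$; $\Sigma$ is identified with the unit sphere $S^2$ with round metric $\sigma$. $g^j(x,t)$ and $H_j(x,t)$ are the induced metric and mean curvature of $\Sigma^j_t$; $\hat g^j=\frac{1}{H_j^2}dt^2+g^j(x,t)$, $\bar g^j=\frac{r_0^2}{4}e^tdt^2+g^j(x,t)$, $\delta=\frac{r_0^2}{4}e^tdt^2+r_0^2e^t\sigma$; $d_{\hat g^j}$, $d_\delta$ are the induced length distances. Inequalities between metrics are as quadratic forms; $C,D,r_0$ are constants independent of $j$. *)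

From HB Require Import structures.
From mathcomp Require Import all_boot all_order all_algebra.
From mathcomp Require Import all_classical all_reals all_analysis.
Set Implicit Arguments. Unset Strict Implicit. Unset Printing Implicit Defensive.
Import Order.TTheory GRing.Theory Num.Theory.
Import numFieldNormedType.Exports.
Local Open Scope classical_set_scope.
Local Open Scope ring_scope.

Section Defs.
Variable R : realType.

Definition dot3 (u v : 'rV[R]_3) : R := (u *m v^T) 0 0.

Definition on_sphere (x : 'rV[R]_3) : Prop := dot3 x x = 1.

Definition tangent (x v : 'rV[R]_3) : Prop := dot3 x v = 0.

Definition bform (M : 'M[R]_3) (u v : 'rV[R]_3) : R := (u *m M *m v^T) 0 0.

Definition UT (T : R) : set ('rV[R]_3 * R) :=
  [set p | on_sphere p.1 /\ 0 <= p.2 <= T].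

(* Metrics on S^2 x [0,T] without cross terms:  A(x,t) dt^2 + G(x,t),
   where A(x,t) is a scalar and G(x,t) is a bilinear form on T_x S^2
   (represented by a 3x3 matrix, only its values on tangent vectors matter). *)

(* Admissible curves: C^1 curves s |-> (c s, tau s) on [0,1] lying in
   S^2 x [0,T], from p to q (defined and C^1 on all of R; every C^1 curve
   on [0,1] extends so). *)
Definition admissible (T : R) (p q : 'rV[R]_3 * R)
    (c : R -> 'rV[R]_3) (tau : R -> R) : Prop :=
  [/\ (forall s, derivable c s 1) /\ continuous (derive1 c),
      (forall s, derivable tau s 1) /\ continuous (derive1 tau),
      (forall s, 0 <= s <= 1 -> UT T (c s, tau s)),
      (c 0, tau 0) = p & (c 1, tau 1) = q].

Definition curve_length (A : 'rV[R]_3 -> R -> R) (G : 'rV[R]_3 -> R -> 'M[R]_3)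
    (c : R -> 'rV[R]_3) (tau : R -> R) : \bar R :=
  (\int[lebesgue_measure]_(s in `[0%R, 1%R])
     (Num.sqrt (A (c s) (tau s) * (derive1 tau s) ^+ 2
                + bform (G (c s) (tau s)) (derive1 c s) (derive1 c s)))%:E)%E.

Definition len_dist (T : R) (A : 'rV[R]_3 -> R -> R) (G : 'rV[R]_3 -> R -> 'M[R]_3)
    (p q : 'rV[R]_3 * R) : \bar R :=
  ereal_inf [set l | exists (c : R -> 'rV[R]_3) (tau : R -> R),
                        admissible T p q c tau /\ l = curve_length A G c tau].

Definition len_diam (T : R) (A : 'rV[R]_3 -> R -> R) (G : 'rV[R]_3 -> R -> 'M[R]_3)
    : \bar R :=
  ereal_sup [set l | exists p q, UT T p /\ UT T q /\ l = len_dist T A G p q].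

(* The round metric sigma on S^2 is the restriction of the Euclidean product:
   matrix 1%:M.  The metric delta = r0^2/4 e^t dt^2 + r0^2 e^t sigma. *)
Definition delta_A (r0 : R) : 'rV[R]_3 -> R -> R := fun _ t => r0 ^+ 2 / 4 * expR t.
Definition delta_G (r0 : R) : 'rV[R]_3 -> R -> 'M[R]_3 :=
  fun _ t => (r0 ^+ 2 * expR t) *: 1%:M.

End Defs.

From HB Require Import structures.
From mathcomp Require Import all_boot all_order all_algebra.
From mathcomp Require Import all_classical all_reals all_analysis.
From mathcomp Require Import ring lra.
Set Implicit Arguments. Unset Strict Implicit. Unset Printing Implicit Defensive.
Import Order.TTheory GRing.Theory Num.Theory.
Import numFieldNormedType.Exports.
Local Open Scope classical_set_scope.
Local Open Scope ring_scope.

(* With K = C + 4/r0^2 the two lower bounds give hat g^j >= (1 - K/j) delta as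
   quadratic forms on tangent vectors of U_T: for the dt^2 part,
   1/H_j^2 >= r0^2/4 e^t - 1/j >= (1 - K/j) r0^2/4 e^t because e^t >= 1.
   The velocity of an admissible curve is tangent to S^2, so the comparison
   applies under the length integral, and every hat g^j-length, hence
   d_{hat g^j}, is at least sqrt(1 - K/j) times the corresponding delta-length.
   Letting j -> oo gives the claim. *)

Section forms.
Context {R : realType}.

Lemma dot3_ge0 (u : 'rV[R]_3) : 0 <= dot3 u u.
Proof. by rewrite /dot3 mxE sumr_ge0 // => i _; rewrite mxE -expr2 sqr_ge0. Qed.

Lemma bform_scale1 (a : R) (u : 'rV[R]_3) : bform (a *: 1%:M) u u = a * dot3 u u.
Proof. by rewrite /bform /dot3 -scalemxAr mulmx1 -scalemxAl mxE. Qed.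

End forms.

Section tangency.
Context {R : realType}.

Lemma derive1_eq0_at_right (V : normedModType R) (f : R -> V) a :
  derivable f a 1 -> (\forall h \near 0^'+, f (h + a) = f a) -> 'D_1 f a = 0.
Proof.
move=> df fa; rewrite /derive cvg_at_rightE //; apply: lim_near_cst => //.
near=> h; rewrite /= scaler1.
have -> : f (h + a) = f a by near: h.
by rewrite subrr scaler0.
Unshelve. all: by end_near. Qed.

Lemma derive1_eq0_at_left (V : normedModType R) (f : R -> V) a :
  derivable f a 1 -> (\forall h \near 0^'-, f (h + a) = f a) -> 'D_1 f a = 0.
Proof.
move=> df fa; rewrite /derive cvg_at_leftE //; apply: lim_near_cst => //.
near=> h; rewrite /= scaler1.
have -> : f (h + a) = f a by near: h.
by rewrite subrr scaler0.
Unshelve. all: by end_near. Qed.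

Lemma is_derive_dot_self n (c : R -> 'rV[R]_n) s : derivable c s 1 ->
  is_derive s 1 (fun t => (c t *m (c t)^T) 0 0) (2 * (c s *m ('D_1 c s)^T) 0 0).
Proof.
move=> dc; have dci i : derivable (fun t => c t 0 i) s 1.
  exact: (derivable_mxP c s 1).1 dc 0 i.
have -> : (fun t => (c t *m (c t)^T) 0 0) = \sum_i (fun t => c t 0 i * c t 0 i).
  by apply/funext => t; rewrite mxE fct_sumE; apply: eq_bigr => i _; rewrite mxE.
have dsum : derivable (\sum_i (fun t => c t 0 i * c t 0 i)) s 1.
  by apply: derivable_sum => i; apply: derivableM.
apply: DeriveDef => //; rewrite derive_sum; last by move=> i; apply: derivableM.
rewrite mxE big_distrr /=; apply: eq_bigr => i _.
by rewrite deriveM // derive_mx // !mxE /GRing.scale /=; ring.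
Qed.

(* |c|^2 = 1 on [0, 1]; at s = 1 only the left difference quotients stay in [0, 1]. *)
Lemma admissible_tangent (T : R) (p q : 'rV[R]_3 * R) (c : R -> 'rV[R]_3)
    (tau : R -> R) s :
  admissible T p q c tau -> 0 <= s <= 1 -> tangent (c s) (derive1 c s).
Proof.
case=> -[dc _] _ onU _ _ /andP[s0 s1].
have unit_c t : 0 <= t <= 1 -> (c t *m (c t)^T) 0 0 = 1 by move=> /onU[].
have dnorm := is_derive_dot_self (dc s).
suff : 2 * dot3 (c s) (derive1 c s) = 0.
  by move/eqP; rewrite mulf_eq0 pnatr_eq0 => /eqP.
rewrite derive1E /dot3 -(@derive_val _ _ _ _ _ _ _ dnorm).
have [s_lt1 | s_ge1] := ltrP s 1.
- apply: derive1_eq0_at_right => //; near=> h; rewrite /= !unit_c ?s0 ?s1 //.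
  have h_gt0 : 0 < h by near: h; exact: nbhs_right_gt.
  have h_lt : h < 1 - s by near: h; apply: nbhs_right_lt; rewrite subr_gt0.
  apply/andP; split; lra.
- apply: derive1_eq0_at_left => //; near=> h; rewrite /= !unit_c ?s0 ?s1 //.
  have h_lt0 : h < 0 by near: h; exact: nbhs_left_lt.
  have h_gt : - 1 < h by near: h; apply: nbhs_left_gt; rewrite ltrN10.
  apply/andP; split; lra.
Unshelve. all: by end_near. Qed.

End tangency.

Section scaled_integral.
Context {d} {T : measurableType d} {R : realType} (mu : {measure set T -> \bar R}).
Import HBNNSimple.
Local Open Scope ereal_scope.

(* No measurability is assumed, so [ge0_le_integral] does not apply: we compare
   the simple functions below [f], scaled by [a], with [g] directly. *)
Lemma ge0_le_integral_scaled (D : set T) (f g : T -> \bar R) (a : R) : (0 < a)%R ->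
  (forall x, D x -> 0 <= f x) -> (forall x, D x -> a%:E * f x <= g x) ->
  a%:E * \int[mu]_(x in D) f x <= \int[mu]_(x in D) g x.
Proof.
move=> a_gt0 f_ge0 fg.
have g_ge0 x : D x -> 0 <= g x.
  move=> Dx; apply: le_trans (fg x Dx).
  by apply: mule_ge0; [rewrite lee_fin ltW | exact: f_ge0].
rewrite (ge0_integralE mu f_ge0) (ge0_integralE mu g_ge0) -lee_pdivlMl //.
apply: ge_ereal_sup => _ [h hf <-].
rewrite lee_pdivlMl // -sintegralrM.
apply: ereal_sup_ubound; exists (scale_nnsfun h (ltW a_gt0)) => //= x.
have := hf x; rewrite /patch; case: ifPn => [Dx hfx | _ hx].
  rewrite EFinM (le_trans _ (fg x (set_mem Dx))) //.
  by rewrite lee_wpmul2l // lee_fin ltW.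
have -> : h x = 0%R by apply/le_anti; rewrite -lee_fin hx /= fun_ge0.
by rewrite mulr0.
Qed.

End scaled_integral.

Section length_comparison.
Context {R : realType}.
Local Open Scope ereal_scope.

Lemma len_dist_ge0 (T : R) A G (p q : 'rV[R]_3 * R) : 0 <= len_dist T A G p q.
Proof.
apply: le_ereal_inf_tmp => _ [c [tau [_ ->]]].
by apply: integral_ge0 => s _; rewrite lee_fin sqrtr_ge0.
Qed.

Variables (T k : R) (A A' : 'rV[R]_3 -> R -> R) (G G' : 'rV[R]_3 -> R -> 'M[R]_3).
Hypothesis k_gt0 : (0 < k)%R.
Hypothesis le_A : forall x t, UT T (x, t) -> (k * A x t <= A' x t)%R.
Hypothesis le_G : forall x t v, UT T (x, t) -> tangent x v ->
  (k * bform (G x t) v v <= bform (G' x t) v v)%R.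

Lemma curve_length_scale_le p q c tau : admissible T p q c tau ->
  (Num.sqrt k)%:E * curve_length A G c tau <= curve_length A' G' c tau.
Proof.
move=> adm; apply: ge0_le_integral_scaled => [|s _|s].
- by rewrite sqrtr_gt0.
- by rewrite lee_fin sqrtr_ge0.
rewrite /= in_itv /= => s01.
have [_ _ onU _ _] := adm; have Us := onU s s01.
have tan := admissible_tangent adm s01.
rewrite -EFinM lee_fin -sqrtrM ?(ltW k_gt0) //; apply: ler_wsqrtr.
by rewrite mulrDr mulrA lerD ?le_G // ler_wpM2r ?sqr_ge0 ?le_A.
Qed.

Lemma len_dist_scale_le p q :
  (Num.sqrt k)%:E * len_dist T A G p q <= len_dist T A' G' p q.
Proof.
apply: le_ereal_inf_tmp => _ [c [tau [adm ->]]].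
apply: le_trans (curve_length_scale_le adm).
rewrite lee_wpmul2l ?lee_fin ?sqrtr_ge0 //.
by apply: ereal_inf_lbound; exists c, tau.
Qed.

End length_comparison.

Lemma hat_dist_ge_delta_dist {R : realType} (T r0 C eps : R)
    (g : 'rV[R]_3 -> R -> 'M[R]_3) (H : 'rV[R]_3 -> R -> R) p q :
  0 < r0 -> 0 <= C -> 0 <= eps -> (C + (r0 ^+ 2 / 4)^-1) * eps < 1 ->
  (forall x t, UT T (x, t) -> r0 ^+ 2 / 4 * expR t - eps <= (H x t ^+ 2)^-1) ->
  (forall x t v, UT T (x, t) -> tangent x v ->
     (1 - C * eps) * r0 ^+ 2 * expR t * dot3 v v <= bform (g x t) v v) ->
  ((Num.sqrt (1 - (C + (r0 ^+ 2 / 4)^-1) * eps))%:E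
     * len_dist T (delta_A r0) (delta_G r0) p q
   <= len_dist T (fun x t => (H x t ^+ 2)^-1)%R g p q)%E.
Proof.
move=> r0_gt0 C_ge0 eps_ge0 Keps_lt1 hH hg.
set m := r0 ^+ 2 / 4; have m_gt0 : 0 < m by rewrite divr_gt0 ?exprn_gt0.
apply: len_dist_scale_le => [|x t xt|x t v xt tv].
- by rewrite subr_gt0.
- apply: le_trans (hH x t xt); rewrite /delta_A -/m.
  have [_ /andP[t_ge0 _]] := xt.
  have e_ge1 : 1 <= expR t by rewrite -expR0 ler_expR.
  have mE : m^-1 * (m * expR t) = expR t by rewrite mulrA mulVf ?gt_eqF ?mul1r.
  have CE_ge0 : 0 <= C * eps * (m * expR t) by rewrite !mulr_ge0 ?expR_ge0 // ltW.
  have : eps <= eps * (m^-1 * (m * expR t)) by rewrite mE ler_peMr.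
  lra.
- apply: le_trans (hg x t v xt tv).
  rewrite /delta_G bform_scale1 !mulrA ler_wpM2r ?dot3_ge0 // ler_wpM2r ?expR_ge0 //.
  have : 0 <= m^-1 * eps * (r0 * r0) by rewrite !mulr_ge0 ?invr_ge0 // ltW.
  lra.
Qed.

Lemma cvg_divn0 {R : realType} (K : R) : K / n%:R @[n --> \oo] --> (0 : R).
Proof.
rewrite -(mulr0 K); apply: cvgMl_tmp.
apply/(gtr0_cvgV0 (f := fun n : nat => n%:R : R)); last exact: cvgr_idn.
by near=> n; rewrite ltr0n; near: n; exists 1%N.
Unshelve. all: by end_near. Qed.

Lemma cvg_sqrt_1Bdivn {R : realType} (K : R) :
  Num.sqrt (1 - K / n%:R) @[n --> \oo] --> (1 : R).
Proof.
rewrite -[X in _ --> X]sqrtr1 -[X in _ --> Num.sqrt X]subr0.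
apply: (@cvg_comp _ _ _ (fun n => 1 - K / n%:R) Num.sqrt \oo).
  exact: cvgB (cvg_cst (1 : R)) (cvg_divn0 K).
exact: sqrt_continuous.
Qed.

Lemma limn_einf_ge_scaled {R : realType} (a : nat -> R) (u : nat -> \bar R)
    (d : \bar R) :
  (0 <= d)%E -> a n @[n --> \oo] --> (1 : R) ->
  (\forall n \near \oo, (a n)%:E * d <= u n)%E -> (d <= limn_einf u)%E.
Proof.
move=> d_ge0 a1 [N _ aNu]; apply/lee_mul01Pr => // r /andP[_ r_lt1].
have [M _ aM] := cvgr_ge _ a1 _ r_lt1.
rewrite limn_einf_lim; apply: lime_ge; first exact: is_cvg_einfs.
near=> n; apply: le_ereal_inf_tmp => _ [m /= nm <-].
have /[!geq_max] /andP[Nm Mm] : (maxn N M <= m)%N.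
  by apply: leq_trans nm; near: n; exists (maxn N M).
by apply: le_trans (aNu m Nm); rewrite lee_wpmul2r // lee_fin aM.
Unshelve. all: by end_near. Qed.

Theorem corollary4p2 (R : realType) (T r0 C D : R)
  (g : nat -> 'rV[R]_3 -> R -> 'M[R]_3) (H : nat -> 'rV[R]_3 -> R -> R) :
  0 < T -> 0 < r0 -> 0 < C ->
  (* regularity of the induced metrics and mean curvatures *)
  (forall j, continuous (fun xt : 'rV[R]_3 * R => g j xt.1 xt.2)) ->
  (forall j, continuous (fun xt : 'rV[R]_3 * R => H j xt.1 xt.2)) ->
  (forall j x t, (g j x t)^T = g j x t) ->
  (forall j x t v, (0 < j)%N -> UT T (x, t) -> tangent x v -> v != 0 ->
     0 < bform (g j x t) v v) ->
  (* H > 0 along the flow *)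
  (forall j x t, (0 < j)%N -> UT T (x, t) -> 0 < H j x t) ->
  (* 1/H_j^2 >= r0^2/4 e^t - 1/j *)
  (forall j x t, (0 < j)%N -> UT T (x, t) ->
     r0 ^+ 2 / 4 * expR t - j%:R^-1 <= (H j x t ^+ 2)^-1) ->
  (* diam(U_T, gbar^j) <= D *)
  (forall j, (0 < j)%N ->
     (len_diam T (delta_A r0) (g j) <= D%:E)%E) ->
  (* (1 - C/j) r0^2 e^t sigma <= g^j(x,t) <= C r0^2 e^t sigma *)
  (forall j x t v, (0 < j)%N -> UT T (x, t) -> tangent x v ->
     (1 - C / j%:R) * r0 ^+ 2 * expR t * dot3 v v <= bform (g j x t) v v /\
     bform (g j x t) v v <= C * r0 ^+ 2 * expR t * dot3 v v) ->
  forall p q, UT T p -> UT T q ->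
    (len_dist T (delta_A r0) (delta_G r0) p q <=
     limn_einf (fun j => len_dist T (fun x t => (H j x t ^+ 2)^-1)%R (g j) p q))%E.
Proof.
move=> _ r0_gt0 C_gt0 _ _ _ _ _ hH _ hg p q _ _.
set K := C + (r0 ^+ 2 / 4)^-1.
apply: (limn_einf_ge_scaled _ (cvg_sqrt_1Bdivn K)); first exact: len_dist_ge0.
near=> n; have n_gt0 : (0 < n)%N by near: n; exists 1%N.
apply: (hat_dist_ge_delta_dist _ _ r0_gt0 (ltW C_gt0)).
- by rewrite invr_ge0.
- by near: n; apply: cvgr_lt (cvg_divn0 K) _ ltr01.
- by move=> x t; apply: hH.
- by move=> x t v xt tv; case: (hg n x t v n_gt0 xt tv).
Unshelve. all: by end_near. Qed.
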